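(* Let $n_1,n_2,n_3$ be distinct primes and let $k>1$ be an integer with $\gcd(k,n_i)=1$ for $i=1,2,3$, and suppose $n=n_1n_2n_3$ is a pseudoprime of basis $k$. Then for all $m,j\in\mathbb{N}$, $$\frac{k^{\,j\,|n_2n_3-n_1^{m}|}-1}{n_1}\in\mathbb{N},\qquad \frac{k^{\,j\,|n_1n_2-n_3^{m}|}-1}{n_3}\in\mathbb{N},\qquad \frac{k^{\,j\,|n_1n_3-n_2^{m}|}-1}{n_2}\in\mathbb{N}.$$
   Context: A positive integer $n$ is called a pseudoprime of basis $k$ (where $k>1$ is an integer) if $n$ is an odd composite number, $\gcd(n,k)=1$, and $k^{n-1}\equiv 1 \pmod n$. $\mathbb{N}$ denotes the positive integers. *)

From mathcomp Require Import all_boot.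

Definition absdiff (a b : nat) : nat := (a - b) + (b - a).

Definition pseudoprime (k n : nat) : Prop :=
  [/\ odd n, 1 < n, ~~ prime n, coprime n k & k ^ (n - 1) = 1 %[mod n]].

(* (a - 1)/d is a positive integer (an element of N = {1,2,...}). *)
Definition quot_in_N (a d : nat) : Prop :=
  exists q : nat, 0 < q /\ a - 1 = q * d.

From mathcomp Require Import all_boot cyclic zify.

(* The exponents e with k ^ e = 1 (mod p) are closed under sums, multiples and
   differences.  Fermat puts p - 1 among them, hence every p ^ m - 1 as well,
   and p * c - 1 = (p - 1) * c + (c - 1) brings c - 1 in as soon as p * c - 1
   is there (which the pseudoprime condition guarantees for each prime factor
   p of n = p * c).  So |c - p ^ m| = |(c - 1) - (p ^ m - 1)| is such an
   exponent, and it is nonzero since p does not divide c. *)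

Lemma expn_mod1_add {k p u v : nat} :
  k ^ u = 1 %[mod p] -> k ^ v = 1 %[mod p] -> k ^ (u + v) = 1 %[mod p].
Proof. by move=> ku kv; rewrite expnD -modnMm ku kv modnMm. Qed.

Lemma expn_mod1_dvd {k p d e : nat} :
  d %| e -> k ^ d = 1 %[mod p] -> k ^ e = 1 %[mod p].
Proof. by move=> /dvdnP[c ->] kd; rewrite mulnC expnM -modnXm kd modnXm exp1n. Qed.

Lemma expn_mod1_sub {k p u v : nat} :
  k ^ u = 1 %[mod p] -> k ^ v = 1 %[mod p] -> k ^ (u - v) = 1 %[mod p].
Proof.
move=> ku kv; have [vu | /ltnW] := leqP v u; last by rewrite -subn_eq0 => /eqP ->.
by move: ku; rewrite -{1}(subnK vu) expnD -modnMmr kv modnMmr muln1.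
Qed.

Lemma expn_mod1_absdiff {k p u v : nat} :
  k ^ u = 1 %[mod p] -> k ^ v = 1 %[mod p] -> k ^ absdiff u v = 1 %[mod p].
Proof. by move=> ku kv; apply: expn_mod1_add; apply: expn_mod1_sub. Qed.

Lemma absdiff_gt0 a b : (0 < absdiff a b) = (a != b).
Proof. rewrite /absdiff; lia. Qed.

Lemma absdiff_pred a b : 0 < a -> 0 < b -> absdiff a b = absdiff a.-1 b.-1.
Proof. rewrite /absdiff; lia. Qed.

Lemma quot_in_N_mod1 a d : 0 < d -> 1 < a -> a = 1 %[mod d] -> quot_in_N a d.
Proof.
move=> d_gt0 a_gt1 /eqP; rewrite eqn_mod_dvd ?(ltnW a_gt1) // => /divnK ad.
exists ((a - 1) %/ d); split=> //.
by rewrite divn_gt0 // dvdn_leq ?subn_gt0 // -ad dvdn_mull.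
Qed.

Section PrimeModulus.

Variables k p : nat.
Hypotheses (p_prime : prime p) (k_coprime : coprime k p).

Lemma expn_mod1_predn : k ^ p.-1 = 1 %[mod p].
Proof. by rewrite -totient_prime // Euler_exp_totient. Qed.

Lemma expn_mod1_predX m : k ^ (p ^ m).-1 = 1 %[mod p].
Proof. exact: expn_mod1_dvd (dvdn_pred_predX p m) expn_mod1_predn. Qed.

Lemma expn_mod1_cofactor c :
  0 < c -> k ^ (p * c).-1 = 1 %[mod p] -> k ^ c.-1 = 1 %[mod p].
Proof.
move=> c_gt0 kpc; have p_gt0 := prime_gt0 p_prime.
have -> : c.-1 = (p * c).-1 - p.-1 * c by nia.
exact: expn_mod1_sub kpc (expn_mod1_dvd (dvdn_mulr c (dvdnn _)) expn_mod1_predn).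
Qed.

Lemma quot_in_N_absdiff_cofactor c m j :
  1 < k -> ~~ (p %| c) -> k ^ (p * c).-1 = 1 %[mod p] -> 0 < m -> 0 < j ->
  quot_in_N (k ^ (j * absdiff c (p ^ m))) p.
Proof.
move=> k_gt1 p_ndvd_c kpc m_gt0 j_gt0.
have c_gt0 : 0 < c by case: c p_ndvd_c {kpc} => //; rewrite dvdn0.
have pm_gt0 : 0 < p ^ m by rewrite expn_gt0 prime_gt0.
have c_neq_pm : c != p ^ m.
  by apply: contraNneq p_ndvd_c => ->; rewrite dvdn_exp.
have e_gt0 : 0 < j * absdiff c (p ^ m) by rewrite muln_gt0 j_gt0 absdiff_gt0.
apply: quot_in_N_mod1; first exact: prime_gt0.
  apply: (leq_trans k_gt1); rewrite -{1}[k]expn1.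
  exact: leq_pexp2l (ltnW k_gt1) e_gt0.
apply: expn_mod1_dvd (dvdn_mull j (dvdnn _)) _.
rewrite absdiff_pred //; apply: expn_mod1_absdiff.
  exact: expn_mod1_cofactor.
exact: expn_mod1_predX.
Qed.

End PrimeModulus.

Lemma pseudoprime_expn_mod1 k n d :
  pseudoprime k n -> d %| n -> k ^ (n.-1) = 1 %[mod d].
Proof. by case=> _ _ _ _ kn dn; rewrite -(modn_dvdm _ dn) -subn1 kn modn_dvdm. Qed.

Lemma prime_ndvdM p a b :
  prime p -> prime a -> prime b -> p != a -> p != b -> ~~ (p %| a * b).
Proof.
by move=> pp pa pb pa' pb'; rewrite Euclid_dvdM // !dvdn_prime2 // (negPf pa') (negPf pb').
Qed.

Theorem mainTheorem4 (n1 n2 n3 k : nat) :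
  prime n1 -> prime n2 -> prime n3 ->
  n1 != n2 -> n1 != n3 -> n2 != n3 ->
  1 < k ->
  coprime k n1 -> coprime k n2 -> coprime k n3 ->
  pseudoprime k (n1 * n2 * n3) ->
  forall m j : nat, 0 < m -> 0 < j ->
    [/\ quot_in_N (k ^ (j * absdiff (n2 * n3) (n1 ^ m))) n1,
        quot_in_N (k ^ (j * absdiff (n1 * n2) (n3 ^ m))) n3 &
        quot_in_N (k ^ (j * absdiff (n1 * n3) (n2 ^ m))) n2].
Proof.
move=> p1 p2 p3 n12 n13 n23 k_gt1 k1 k2 k3 psp m j m_gt0 j_gt0.
have k_mod_factor d c : d * c = n1 * n2 * n3 -> k ^ (d * c).-1 = 1 %[mod d].
  by move=> dc; rewrite dc; apply: pseudoprime_expn_mod1 psp _; rewrite -dc dvdn_mulr.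
split; apply: quot_in_N_absdiff_cofactor => //.
- exact: prime_ndvdM.
- by apply: k_mod_factor; rewrite mulnA.
- by apply: prime_ndvdM; rewrite // eq_sym.
- by apply: k_mod_factor; rewrite mulnC.
- by apply: prime_ndvdM; rewrite // eq_sym.
- by apply: k_mod_factor; rewrite mulnCA mulnA.
Qed.
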